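(* Let $\mathcal{G}=(\mathcal{V},\mathcal{E})$ be a graph with node set $\mathcal{V}=\{1,\dots,n\}$, adjacency matrix $A=[a_{ij}]\in\{0,1\}^{n\times n}$ (with $a_{ij}=1$ iff $(i,j)\in\mathcal{E}$), and degree matrix $D=\mathrm{diag}(d_1,\dots,d_n)$, where $d_i=\sum_{j=1}^n a_{ij}$; assume $d_i>0$ for all $i$, so that $D^{-1}$ exists. Let $X\in\mathbb{R}^{n\times d}$ be a node feature matrix, $W_1\in\mathbb{R}^{d\times d'}$ and $W_2\in\mathbb{R}^{d'\times d'}$ (the propagation matrix). Consider the feature propagation process $$\widetilde{X} = X W_1 + D^{-1} A\, \widetilde{X}\, W_2,$$ equivalently, row-wise, $\widetilde{x_i}=W_1^T x_i + W_2^T \sum_{j\in \mathcal{N}(i)}\frac{1}{d_i}\widetilde{x_j}$ for $i=1,\dots,n$, where $\mathcal{N}(i)$ is the set of neighbors of node $i$, $x_i^T$ is the $i$-th row of $X$ and $\widetilde{x_i}^T$ is the $i$-th row of $\widetilde{X}$. Suppose that (1) $W_2$ is entrywise nonnegative, and (2) $\max\{W_2^T\mathbf{e}\}<1$, where $\mathbf{e}$ is the all-ones vector and the maximum is over the entries of the vector $W_2^T\mathbf{e}$ (i.e., every column sum of $W_2$ is strictly less than $1$). Then the propagation process is convergent: the iteration $\widetilde{X}^{(t+1)} = X W_1 + D^{-1}A\widetilde{X}^{(t)}W_2$ converges for every initial $\widetilde{X}^{(0)}\in\mathbb{R}^{n\times d'}$, and its limit is the unique solution $\widetilde{X}\in\mathbb{R}^{n\times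 d'}$ of the equation $\widetilde{X} = X W_1 + D^{-1} A \widetilde{X} W_2$.
   Context: All matrices are real. $\mathbf{e}$ denotes the all-ones column vector of the appropriate dimension. For a vector $v$, $\max\{v\}$ denotes its largest entry. *)

From HB Require Import structures.
From mathcomp Require Import all_boot all_order all_algebra.
From mathcomp Require Import all_classical all_reals all_analysis.
Set Implicit Arguments. Unset Strict Implicit. Unset Printing Implicit Defensive.
Import Order.TTheory GRing.Theory Num.Theory numFieldNormedType.Exports.
Local Open Scope ring_scope.

Definition deg (R : realType) (n : nat) (A : 'M[R]_n) (i : 'I_n) : R :=
  \sum_(j < n) A i j.

Definition degmx (R : realType) (n : nat) (A : 'M[R]_n) : 'M[R]_n :=
  diag_mx (\row_i deg A i).

Definition prop_step (R : realType) (n d d' : nat) (A : 'M[R]_n)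
  (X : 'M[R]_(n, d)) (W1 : 'M[R]_(d, d')) (W2 : 'M[R]_d') (Y : 'M[R]_(n, d'))
  : 'M[R]_(n, d') :=
  X *m W1 + invmx (degmx A) *m A *m Y *m W2.

Definition prop_iter (R : realType) (n d d' : nat) (A : 'M[R]_n)
  (X : 'M[R]_(n, d)) (W1 : 'M[R]_(d, d')) (W2 : 'M[R]_d') (X0 : 'M[R]_(n, d'))
  (t : nat) : 'M[R]_(n, d') :=
  iter t (prop_step A X W1 W2) X0.

From HB Require Import structures.
From mathcomp Require Import all_boot all_order all_algebra.
From mathcomp Require Import all_classical all_reals all_analysis.
Set Implicit Arguments. Unset Strict Implicit. Unset Printing Implicit Defensive.
Import Order.TTheory GRing.Theory Num.Theory numFieldNormedType.Exports.
Local Open Scope ring_scope.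
Local Open Scope classical_set_scope.

(* Under the entrywise max-norm on matrices, left multiplication by D^-1 A
   (nonnegative, rows summing to 1) does not increase the norm and right
   multiplication by W2 (nonnegative, column sums at most q < 1) scales it by
   at most q.  Hence the propagation step is a q-contraction of the complete
   space of n x d' matrices, and Banach's fixed point theorem applies. *)

(* The library proves [mx_complete] but does not declare the
   completeNormedModType structure on real matrices. *)
HB.instance Definition _ (R : realType) m n := Complete.on 'M[R]_(m, n).

Section contraction_fixpoint.
Variables (R : realType) (V : completeNormedModType R) (f : V -> V) (q : R).
Hypotheses (q_ge0 : 0 <= q) (q_lt1 : q < 1).
Hypothesis f_lipschitz : forall x y, `|f x - f y| <= q * `|x - y|.

Lemma contraction_attracting_fixpoint :
  exists p : V,
    p = f p /\ (forall x, x = f x -> x = p) /\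
    (forall x0, (fun t => iter t f x0) @ \oo --> p).
Proof.
pose g : {fun [set: V] >-> [set: V]} := totalfun_ setT f.
have g_ctr : contraction (NngNum q_ge0) g by split=> // -[x y] _; exact: f_lipschitz.
have fixed_uniq x y : x = f x -> y = f y -> x = y.
  by apply: (@contraction_fixpoint_unique _ _ _ g) => //; exists (NngNum q_ge0).
have lim_fixed x0 : limn (fun t => iter t f x0) = f (limn (fun t => iter t f x0)).
  exact: (contraction_cvg_fixed g_ctr (I : [set: V] x0) closedT).
exists (limn (fun t => iter t f 0)); split; first exact: lim_fixed.
split=> [x fx|x0]; first exact: fixed_uniq (lim_fixed 0).
rewrite -(fixed_uniq _ _ (lim_fixed x0) (lim_fixed 0)).
exact: (contraction_cvg g_ctr (I : [set: V] x0)).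
Qed.

End contraction_fixpoint.

Section matrix_max_norm.
Variable R : realDomainType.

Lemma normr_mx_entry_le m n (M : 'M[R]_(m, n)) i j : `|M i j| <= `|M|.
Proof. by rewrite [leRHS]/Num.Def.normr /= mx_normrE; exact: (le_bigmax _ _ (i, j)). Qed.

Lemma normr_mx_le m n (M : 'M[R]_(m, n)) (c : R) :
  0 <= c -> (forall i j, `|M i j| <= c) -> `|M| <= c.
Proof.
move=> c_ge0 M_le; rewrite [leLHS]/Num.Def.normr /= mx_normrE.
by apply/bigmax_leP; split=> // -[i j] _; exact: M_le.
Qed.

Lemma normr_trmx m n (M : 'M[R]_(m, n)) : `|M^T| = `|M|.
Proof.
have trmx_le m' n' (N : 'M[R]_(m', n')) : `|N^T| <= `|N|.
  by apply: normr_mx_le => // i j; rewrite mxE normr_mx_entry_le.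
apply/eqP; rewrite eq_le; apply/andP; split; first exact: trmx_le.
by rewrite -{1}[M]trmxK trmx_le.
Qed.

Lemma normr_mulmx_le_rowsum m n p (P : 'M[R]_(m, n)) (M : 'M[R]_(n, p)) (c : R) :
  0 <= c -> (forall i, \sum_k `|P i k| <= c) -> `|P *m M| <= c * `|M|.
Proof.
move=> c_ge0 P_rowsum; apply: normr_mx_le => [|i j]; first exact: mulr_ge0.
rewrite mxE (le_trans (ler_norm_sum _ _ _)) //.
apply: (@le_trans _ _ (\sum_k `|P i k| * `|M|)).
  by apply: ler_sum => k _; rewrite normrM ler_wpM2l ?normr_mx_entry_le.
by rewrite -mulr_suml ler_wpM2r.
Qed.

Lemma normr_mulmx_le_colsum m n p (M : 'M[R]_(m, n)) (W : 'M[R]_(n, p)) (c : R) :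
  0 <= c -> (forall j, \sum_k `|W k j| <= c) -> `|M *m W| <= c * `|M|.
Proof.
move=> c_ge0 W_colsum; rewrite -normr_trmx trmx_mul -(normr_trmx M).
by apply: normr_mulmx_le_rowsum => // j; under eq_bigr do rewrite mxE.
Qed.

End matrix_max_norm.

Section random_walk_matrix.
Variables (R : realType) (n : nat) (A : 'M[R]_n).
Hypothesis deg_gt0 : forall i, 0 < deg A i.

Lemma invmx_degmx_mulE i k : (invmx (degmx A) *m A) i k = (deg A i)^-1 * A i k.
Proof.
pose Dinv : 'M[R]_n := diag_mx (\row_i (deg A i)^-1).
have DDinv : degmx A *m Dinv = 1%:M.
  apply/matrixP => i' j; rewrite mul_diag_mx !mxE.
  by case: eqP => _; rewrite ?mulr1n ?mulr0n ?mulr0 // mulfV // gt_eqF.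
have [D_unit _] := mulmx1_unit DDinv.
have -> : invmx (degmx A) = Dinv by rewrite -[Dinv](mulKmx D_unit) DDinv mulmx1.
by rewrite mul_diag_mx !mxE.
Qed.

Lemma invmx_degmx_mul_rowsum (A_ge0 : forall i j, 0 <= A i j) i :
  \sum_k `|(invmx (degmx A) *m A) i k| = 1.
Proof.
have entry_ge0 k : 0 <= (deg A i)^-1 * A i k by rewrite mulr_ge0 // invr_ge0 ltW.
under eq_bigr do rewrite invmx_degmx_mulE (ger0_norm (entry_ge0 _)).
by rewrite -mulr_sumr mulVf // gt_eqF.
Qed.

End random_walk_matrix.

Lemma prop_step_lipschitz (R : realType) (n d d' : nat) (A : 'M[R]_n)
    (X : 'M[R]_(n, d)) (W1 : 'M[R]_(d, d')) (W2 : 'M[R]_d') (q : R) :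
  (forall i j, 0 <= A i j) -> (forall i, 0 < deg A i) ->
  0 <= q -> (forall j, \sum_i `|W2 i j| <= q) ->
  forall Y Z, `|prop_step A X W1 W2 Y - prop_step A X W1 W2 Z| <= q * `|Y - Z|.
Proof.
move=> A_ge0 deg_gt0 q_ge0 W2_colsum Y Z.
rewrite /prop_step opprD addrACA subrr add0r -mulmxBl -mulmxBr.
apply: le_trans (normr_mulmx_le_colsum _ q_ge0 W2_colsum) _.
rewrite ler_wpM2l // -[leRHS]mul1r normr_mulmx_le_rowsum // => i.
by rewrite invmx_degmx_mul_rowsum.
Qed.

Theorem theorem1 (R : realType) (n d d' : nat) (A : 'M[R]_n)
  (X : 'M[R]_(n, d)) (W1 : 'M[R]_(d, d')) (W2 : 'M[R]_d') :
  (forall i j, A i j = 0 \/ A i j = 1) ->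
  (forall i, 0 < deg A i) ->
  (forall i j, 0 <= W2 i j) ->
  (forall j, \sum_(i < d') W2 i j < 1) ->
  exists Xs : 'M[R]_(n, d'),
    Xs = prop_step A X W1 W2 Xs /\
    (forall Y : 'M[R]_(n, d'), Y = prop_step A X W1 W2 Y -> Y = Xs) /\
    (forall X0 : 'M[R]_(n, d'), prop_iter A X W1 W2 X0 @ \oo --> Xs).
Proof.
move=> A01 deg_gt0 W2_ge0 W2_colsum_lt1.
have A_ge0 i j : 0 <= A i j by case: (A01 i j) => ->.
pose q := \big[Num.max/0]_j \sum_i W2 i j.
have q_ge0 : 0 <= q by exact: bigmax_ge_id.
have q_lt1 : q < 1 by apply/bigmax_ltP.
have W2_colsum_le j : \sum_i `|W2 i j| <= q.
  by under eq_bigr do rewrite ger0_norm //; exact: le_bigmax.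
exact: contraction_attracting_fixpoint q_ge0 q_lt1
  (prop_step_lipschitz X W1 A_ge0 deg_gt0 q_ge0 W2_colsum_le).
Qed.
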